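(* Let $0 < 1/r_1 \ll \tau, 1/K$ where $\tau<1$, $K\ge1$ and $1-\tau-7\tau^{1/4}/K>0$. If $\mathcal H$ is an $n$-vertex linear hypergraph in which every edge $e$ satisfies $|e|\ge r_1$, then there is a linear ordering $\preceq$ of the edges of $\mathcal H$ such that at least one of the following holds. (a) Every $e\in\mathcal H$ satisfies $d^{\preceq}(e)\le(1-\tau)n$. (b) There is a set $W\subseteq\mathcal H$ such that (W1) $\max_{e\in W}|e| \le (1+3\tau^{1/4}K^4)\min_{e\in W}|e|$ and (W2) $\mathrm{vol}(W) \ge \frac{(1-\tau-7\tau^{1/4}/K)^2}{1+3\tau^{1/4}K^4}$; moreover, if $e^*$ is the last edge of $W$ in $\preceq$, then (O1) every $f\in\mathcal H$ with $e^*\preceq f$ and $f\ne e^*$ satisfies $d^{\preceq}(f)\le(1-\tau)n$, and (O2) for all $e,f\in\mathcal H$ with $f\preceq e\preceq e^*$ we have $|f|\ge|e|$.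
   Context: A hypergraph has a finite vertex set and a set of nonempty edges; linear means any two distinct edges share at most one vertex. For an edge $e$, $N(e)$ is the set of edges $f\ne e$ with $f\cap e\ne\varnothing$. Given a linear ordering $\preceq$ of the edges (reflexive), $d^{\preceq}(e)$ is the number of $f\in N(e)$ with $f\preceq e$. The normalised volume of a set $W$ of edges of an $n$-vertex hypergraph is $\mathrm{vol}(W)=\sum_{e\in W}\binom{|e|}{2}/\binom n2$. Hierarchy: $0<1/r_1\ll\tau,1/K$ means the statement holds whenever $r_1$ is sufficiently large as a function of $\tau$ and $K$. *)

From HB Require Import structures.
From mathcomp Require Import all_boot all_order all_algebra.
From mathcomp Require Export reals.
Set Implicit Arguments. Unset Strict Implicit. Unset Printing Implicit Defensive.
Import Order.TTheory GRing.Theory Num.Theory.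
Local Open Scope ring_scope.

Definition hypergraph (T : finType) (E : {set {set T}}) : Prop :=
  forall e, e \in E -> e != set0.

Definition linear_hg (T : finType) (E : {set {set T}}) : Prop :=
  forall e f, e \in E -> f \in E -> e != f -> (#|e :&: f| <= 1)%N.

(* A linear ordering of the edges of E, represented by a duplicate-free
   enumeration s of E; f ⪯ e iff index f s <= index e s. *)
Definition edge_ordering (T : finType) (E : {set {set T}}) (s : seq {set T}) : Prop :=
  uniq s /\ s =i E.

Definition preceq (T : finType) (s : seq {set T}) (f e : {set T}) : bool :=
  (index f s <= index e s)%N.

Definition nbhd (T : finType) (E : {set {set T}}) (e : {set T}) : {set {set T}} :=
  [set f in E | (f != e) && (f :&: e != set0)].

Definition dprec (T : finType) (E : {set {set T}}) (s : seq {set T}) (e : {set T}) : nat :=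
  #|[set f in nbhd E e | preceq s f e]|.

Definition vol (R : realType) (T : finType) (W : {set {set T}}) : R :=
  (\sum_(e in W) ('C(#|e|, 2))%:R) / ('C(#|T|, 2))%:R.

(* Peel off, one at a time, edges with at most (1 - tau) n neighbours
   among the edges not yet removed; the removed edges, listed in reverse order
   of removal, all satisfy d(e) <= (1 - tau) n.  If nothing survives we are in
   case (a).  Otherwise the surviving core C has minimum degree > (1 - tau) n
   inside C; put C first, sorted by decreasing size, and let e* be its last
   (smallest) edge, of size k.  This gives (O1) and (O2), and W is the set of
   core edges of size at most (1 + delta) k, delta = 3 tau^(1/4) K^4, which
   gives (W1).  For (W2) we double count in the linear hypergraph: many
   neighbours f of e* are small (size <= (1 + gamma) k, gamma = tau^(3/4) K),
   each such f has many neighbours in W, and the link weights of W summed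
   over the vertices of these f bound sum_{g in W} |g|(|g| - 1) from below by
   (1 - tau - 7 tau^(1/4)/K)^2 n^2. *)

From HB Require Import structures.
From mathcomp Require Import all_boot all_order all_algebra.
From mathcomp Require Import reals.
From mathcomp Require Import ring lra.
Import Order.TTheory GRing.Theory Num.Theory.
Set Implicit Arguments. Unset Strict Implicit. Unset Printing Implicit Defensive.

Lemma card_indicator (X : finType) (B : {set X}) (p : pred X) :
  \sum_(x in B) (p x : nat) = #|[set x in B | p x]|.
Proof.
rewrite -sum1_card big_mkcond [RHS]big_mkcond; apply: eq_bigr => x _.
by rewrite inE; case: (x \in B); case: (p x).
Qed.

Lemma double_count (T : finType) (S : {set {set T}}) (A : {set T}) (w : T -> nat) :
  \sum_(g in S) \sum_(x in g :&: A) w x =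
  \sum_(x in A) w x * #|[set g in S | x \in g]|.
Proof.
have -> : \sum_(g in S) \sum_(x in g :&: A) w x =
          \sum_(g in S) \sum_(x in A) (x \in g) * w x.
  apply: eq_bigr => g _; rewrite [RHS]big_mkcond [LHS]big_mkcond.
  by apply: eq_bigr => x _; rewrite inE; case: (x \in g); case: (x \in A); rewrite ?mul0n ?mul1n.
rewrite exchange_big; apply: eq_bigr => x _.
by rewrite -card_indicator big_distrr; apply: eq_bigr => g _; rewrite mulnC.
Qed.

Lemma double_count1 (T : finType) (S : {set {set T}}) (A : {set T}) :
  \sum_(g in S) #|g :&: A| = \sum_(x in A) #|[set g in S | x \in g]|.
Proof.
have := double_count S A (fun=> 1%N); rewrite /=.
under eq_bigr do rewrite sum1_card.
by under [in RHS]eq_bigr do rewrite mul1n.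
Qed.

Lemma bin2_double (m : nat) : ('C(m, 2) * 2 = m * m.-1)%N.
Proof. by rewrite -[2]/(2`!) bin_ffact !ffactnS ffactn0 muln1. Qed.

Section LinearCounting.
Variables (T : finType) (E : {set {set T}}).
Hypothesis lin : linear_hg E.

Lemma codegree_le1 (S : {set {set T}}) (v x : T) : S \subset E -> v != x ->
  (#|[set g in S | (v \in g) && (x \in g)]| <= 1)%N.
Proof.
move=> SE vx; rewrite leqNgt; apply/negP => /card_gt1P [g [h [Hg Hh gh]]].
move: Hg Hh; rewrite !inE => /andP [/(subsetP SE) gE /andP [vg xg]].
move=> /andP [/(subsetP SE) hE /andP [vh xh]].
have := lin gE hE gh; apply/negP; rewrite -ltnNge.
apply: (@leq_trans #|[set v; x]|); first by rewrite cards2 vx.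
apply: subset_leq_card; apply/subsetP => y.
by rewrite !inE => /orP [] /eqP ->; rewrite ?vg ?vh ?xg ?xh.
Qed.

(* If all edges of S meet f, then through a vertex x outside f pass at most
   |f| of them: each meets f in a different vertex. *)
Lemma edges_through_le (S : {set {set T}}) (f : {set T}) (x : T) :
  S \subset E -> (forall g, g \in S -> g :&: f != set0) -> x \notin f ->
  (#|[set g in S | x \in g]| <= #|f|)%N.
Proof.
move=> SE meet xf; set Sx := [set g in S | x \in g].
have SxE : Sx \subset E by apply: subset_trans SE; apply/subsetP => g; rewrite inE => /andP [].
apply: (@leq_trans (\sum_(g in Sx) #|g :&: f|)).
  rewrite -sum1_card; apply: leq_sum => g; rewrite inE => /andP [gS _].
  by rewrite card_gt0 meet.
rewrite double_count1 -[#|f|]sum1_card; apply: leq_sum => v vf.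
apply: leq_trans (codegree_le1 SxE (_ : v != x)); last by apply: contraNneq xf => <-.
apply: subset_leq_card; apply/subsetP => g; rewrite !inE.
by case/andP=> /andP [gS xg] vg; rewrite gS vg xg.
Qed.

Lemma sum_outside_le (S : {set {set T}}) (f : {set T}) : S \subset E ->
  (forall g, g \in S -> g :&: f != set0) ->
  (\sum_(g in S) #|g :\: f| <= #|f| * #|T|)%N.
Proof.
move=> SE meet; under eq_bigr do rewrite setDE.
rewrite double_count1 mulnC -[#|T|]sum1_card big_distrl /=.
apply: (@leq_trans (\sum_(x in ~: f) #|f|)).
  by apply: leq_sum => x; rewrite inE => xf; exact: edges_through_le.
by rewrite big_mkcond leq_sum // => x _; case: (x \in ~: f); rewrite ?mul1n.
Qed.

(* The edges of a linear hypergraph meeting an edge f have at most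
   |f| * n + (their number) vertices in total: each meets f only once. *)
Lemma sum_sizes_nbhd (S : {set {set T}}) (f : {set T}) : f \in E ->
  S \subset nbhd E f -> (\sum_(g in S) #|g| <= #|f| * #|T| + #|S|)%N.
Proof.
move=> fE SN; have inN g : g \in S -> [&& g \in E, g != f & g :&: f != set0].
  by move/(subsetP SN); rewrite inE.
have SE : S \subset E by apply/subsetP => g /inN /and3P [].
apply: (@leq_trans (\sum_(g in S) (1 + #|g :\: f|))).
  apply: leq_sum => g /inN /and3P [gE gf _].
  by rewrite -(cardsID f g) leq_add2r lin.
rewrite big_split /= sum1_card addnC leq_add2r sum_outside_le //.
by move=> g /inN /and3P [].
Qed.

Definition link_weight (W : {set {set T}}) (u : T) : nat :=
  \sum_(g in W | u \in g) #|g :\ u|.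

Lemma link_weight_le (W : {set {set T}}) (u : T) : W \subset E ->
  (link_weight W u <= #|T|)%N.
Proof.
move=> WE; set Wu := [set g in W | u \in g].
have WuE : Wu \subset E by apply: subset_trans WE; apply/subsetP => g; rewrite inE => /andP [].
have -> : link_weight W u = \sum_(g in Wu) #|g :&: [set~ u]|.
  rewrite /link_weight [RHS](eq_bigl (fun g => (g \in W) && (u \in g))); last first.
    by move=> g; rewrite inE.
  by apply: eq_bigr => g _; rewrite setDE.
rewrite double_count1 -[#|T|]sum1_card big_mkcond leq_sum // => x _.
case: ifP => //; rewrite !inE => xu.
apply: leq_trans (codegree_le1 WuE (_ : u != x)); last by rewrite eq_sym.
by apply: subset_leq_card; apply/subsetP => g; rewrite !inE => /andP [/andP [-> ->] ->].
Qed.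

Lemma sum_link_weight (W : {set {set T}}) :
  (\sum_u link_weight W u = \sum_(g in W) 'C(#|g|, 2) * 2)%N.
Proof.
rewrite /link_weight (exchange_big_dep (mem W)) /=; last by move=> u g _ /andP [].
apply: eq_bigr => g gW; rewrite bin2_double.
rewrite (eq_bigl (fun u => u \in g)); last by move=> u; rewrite /= gW.
rewrite (eq_bigr (fun _ => #|g|.-1)); last by move=> u ug; rewrite (cardsD1 u g) ug.
by rewrite sum_nat_const.
Qed.

(* Each edge of W meeting f is seen, minus one vertex, in the link weight
   of a vertex of f. *)
Lemma nbhd_le_link_weight (W : {set {set T}}) (f : {set T}) :
  (\sum_(g in nbhd E f :&: W) #|g|.-1 <= \sum_(u in f) link_weight W u)%N.
Proof.
rewrite /link_weight (exchange_big_dep (mem W)) /=; last by move=> u g _ /andP [].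
rewrite [X in (_ <= X)%N](bigID (mem (nbhd E f))) /= -[X in (X <= _)%N]addn0 leq_add //.
rewrite (eq_bigl (fun g => (g \in W) && (g \in nbhd E f))); last by move=> g; rewrite inE andbC.
apply: leq_sum => g /andP [gW]; rewrite inE => /and3P [_ _ /set0Pn [u]].
rewrite inE => /andP [ug uf].
by rewrite (bigD1 u) /= ?uf ?gW ?ug // (cardsD1 u g) ug leq_addr.
Qed.

(* Summing the link weights over the vertices of the neighbours f of an edge
   e: the vertices outside e are covered at most |e| times (they lie in at
   most |e| such f), the vertices inside e once per f. *)
Lemma nbhd_sum_link_weight (W M : {set {set T}}) (e : {set T}) :
  W \subset E -> e \in E -> M \subset nbhd E e ->
  (\sum_(f in M) \sum_(u in f) link_weight W u <=
   #|e| * \sum_u link_weight W u + #|T| * #|M|)%N.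
Proof.
move=> WE eE Me; have inN f : f \in M -> [&& f \in E, f != e & f :&: e != set0].
  by move/(subsetP Me); rewrite inE.
under eq_bigr do rewrite (big_setID e) /=.
rewrite big_split /= addnC; apply: leq_add.
  under eq_bigr do rewrite setDE.
  rewrite double_count big_distrr /= big_mkcond leq_sum // => u _.
  case: ifP => //; rewrite inE => ue; rewrite mulnC leq_mul2r edges_through_le ?orbT //.
    by apply/subsetP => f /inN /and3P [].
  by move=> f /inN /and3P [].
rewrite mulnC -sum_nat_const leq_sum // => f /inN /and3P [fE fe _].
apply: (@leq_trans (\sum_(u in f :&: e) #|T|)); first by rewrite leq_sum // => u _; exact: link_weight_le.
by rewrite sum_nat_const -[X in (_ <= X)%N]mul1n leq_mul2r lin ?orbT.
Qed.

End LinearCounting.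

Local Open Scope ring_scope.

Section Peeling.
Variables (R : realType) (T : finType) (E : {set {set T}}) (B : R).

(* Degeneracy peeling: repeatedly remove from D an edge with at most B
   neighbours in what is left of D.  What remains is a core C in which every
   edge has more than B neighbours, and the removed edges, listed in reverse
   order of removal as t, each have at most B neighbours among C and the
   edges listed before them. *)
Lemma peel (D : {set {set T}}) :
  exists (C : {set {set T}}) (t : seq {set T}), [/\ C \subset D, uniq t, t =i D :\: C,
    (forall e, e \in t ->
      (#|[set f in nbhd E e | (f \in C) || ((f \in t) && (index f t <= index e t)%N)]|)%:R <= B)
    & (forall f, f \in C -> B < (#|nbhd E f :&: C|)%:R)].
Proof.
have [m] := ubnP #|D|; elim: m D => // m IH D Dm.
have [core | ] := boolP [forall f in D, B < (#|nbhd E f :&: D|)%:R].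
  exists D, [::]; split => //; first by move=> x; rewrite setDv inE.
  by move=> f fD; move/forall_inP: core; apply.
move/forall_inPn => [f fD]; rewrite -leNgt => low_f.
have [|C [t [CD ut tD low_t high_C]]] := IH (D :\ f).
  by move: Dm; rewrite (cardsD1 f D) fD.
have ft : f \notin t by rewrite tD !inE eqxx /= andbF.
have fC : f \notin C by apply/negP => /(subsetP CD); rewrite !inE eqxx.
exists C, (rcons t f); split => //.
- by apply: subset_trans CD (subsetDl _ _).
- by rewrite rcons_uniq ft ut.
- move=> x; rewrite mem_rcons in_cons tD !inE.
  by case: eqP => [->|_] //=; rewrite fC fD.
move=> e; rewrite mem_rcons in_cons => /orP [/eqP ->|et].
  apply: le_trans low_f; rewrite ler_nat; apply: subset_leq_card; apply/subsetP => g.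
  rewrite !inE => /andP [gn /orP [gC|/andP [gt _]]]; rewrite gn /=.
    by move: (subsetP CD g gC); rewrite inE => /andP [].
  move: gt; rewrite mem_rcons in_cons => /orP [/eqP -> //|].
  by rewrite tD !inE => /andP [_ /andP [_ ->]].
apply: le_trans (low_t e et); rewrite ler_nat; apply: subset_leq_card.
apply/subsetP => g; rewrite !inE => /andP [-> /orP [-> // |]] /=.
rewrite -cats1 mem_cat !index_cat et inE.
case: (g \in t) => /= [-> |]; first by rewrite orbT.
by case/andP => /eqP ->; rewrite /= eqxx addn0 leqNgt index_mem et.
Qed.

End Peeling.

Lemma preceq_last_prefix (T : finType) (c t : seq {set T}) (x0 x : {set T}) :
  uniq (c ++ t) -> c != [::] -> x \in c ++ t ->
  preceq (c ++ t) x (last x0 c) = (x \in c).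
Proof.
case: c => [|y c] // u_s _; have u_c : uniq (y :: c) by move: u_s; rewrite cat_uniq => /andP [].
change (last x0 (y :: c)) with (last y c).
rewrite /preceq !index_cat mem_last index_last //.
case: ifP => [xc _|xc]; first by rewrite -ltnS index_mem.
by rewrite mem_cat xc /= leqNgt ltnS leq_addr.
Qed.

Section CoreOrdering.
Variables (R : realType) (T : finType) (E C : {set {set T}}) (t : seq {set T}) (B : R).
Hypotheses (CE : C \subset E) (u_t : uniq t) (t_def : t =i E :\: C).
Hypothesis low_t : forall e, e \in t ->
  (#|[set f in nbhd E e | (f \in C) || ((f \in t) && (index f t <= index e t)%N)]|)%:R <= B.

Definition size_sorted (A : {set {set T}}) : seq {set T} :=
  sort (fun a b : {set T} => (#|b| <= #|a|)%N) (enum A).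

Local Notation c := (size_sorted C).
Local Notation s := (size_sorted C ++ t).

Lemma mem_size_sorted : c =i C.
Proof. by move=> x; rewrite mem_sort mem_enum. Qed.

Lemma uniq_core_ordering : uniq s.
Proof.
rewrite cat_uniq sort_uniq enum_uniq u_t /= andbT; apply/hasPn => x.
by rewrite t_def mem_size_sorted !inE => /andP [].
Qed.

Lemma core_edge_ordering : edge_ordering E s.
Proof.
split; first exact: uniq_core_ordering.
move=> x; rewrite mem_cat mem_size_sorted t_def !inE.
by case xC: (x \in C) => //=; rewrite (subsetP CE).
Qed.

Lemma core_tail_dprec (f : {set T}) : f \in t -> (dprec E s f)%:R <= B.
Proof.
move=> ft; apply: le_trans (low_t ft); rewrite ler_nat; apply: subset_leq_card.
apply/subsetP => g; rewrite !inE => /andP [gN]; rewrite gN /=.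
case gC: (g \in C) => //=; have gc : g \notin c by rewrite mem_size_sorted gC.
have gt : g \in t by rewrite t_def !inE gC; case/and3P: gN.
have fc : f \notin c by rewrite mem_size_sorted; move: ft; rewrite t_def !inE => /andP [].
by rewrite /preceq !index_cat (negbTE gc) (negbTE fc) leq_add2l gt.
Qed.

Hypothesis C_neq0 : C != set0.

Local Notation estar := (last set0 c).

Lemma core_nonempty : c != [::].
Proof.
apply: contraNneq C_neq0 => c0; apply/eqP/setP => x.
by rewrite -mem_size_sorted c0 inE.
Qed.

Lemma preceq_estar (x : {set T}) : x \in s -> preceq s x estar = (x \in C).
Proof.
by move=> xs; rewrite preceq_last_prefix ?mem_size_sorted ?uniq_core_ordering ?core_nonempty.
Qed.

Lemma estar_in_core : estar \in C.
Proof.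
rewrite -mem_size_sorted; have := core_nonempty.
by case: (size_sorted C) => // y c' _; exact: (mem_last y c').
Qed.

Lemma core_prefix_sorted (e f : {set T}) : e \in E -> f \in E ->
  preceq s f e -> preceq s e estar -> (#|e| <= #|f|)%N.
Proof.
have inS x : x \in E -> x \in s by rewrite (core_edge_ordering.2).
move=> /inS es /inS fs fe ee; have eC : e \in C by rewrite -preceq_estar.
have fC : f \in C by rewrite -preceq_estar //; exact: leq_trans fe ee.
move: fe; rewrite -!mem_size_sorted in eC fC; rewrite /preceq !index_cat eC fC.
pose ge_size := fun a b : {set T} => (#|b| <= #|a|)%N.
have ge_tr : transitive ge_size by move=> a b d ba db; apply: leq_trans ba.
have ge_sorted : sorted ge_size c by apply: sort_sorted => a b; exact: leq_total.
exact: (sorted_leq_index ge_tr (fun a => leqnn _) ge_sorted).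
Qed.

Lemma estar_min (w : {set T}) : w \in C -> (#|estar| <= #|w|)%N.
Proof.
move=> wC; have eC := estar_in_core.
apply: core_prefix_sorted; rewrite ?(subsetP CE) /preceq //.
by rewrite -/(preceq s w estar) preceq_estar // (core_edge_ordering.2) (subsetP CE).
Qed.

(* Every edge after e* is a peeled edge, hence has small degree. *)
Lemma after_estar_dprec (f : {set T}) : f \in E -> preceq s estar f -> f != estar ->
  (dprec E s f)%:R <= B.
Proof.
move=> fE ef fe; apply: core_tail_dprec; rewrite t_def !inE fE andbT.
apply: contra fe => fC; have fs : f \in s by rewrite (core_edge_ordering.2).
have es : estar \in s by rewrite (core_edge_ordering.2) (subsetP CE) ?estar_in_core.
have fe' : preceq s f estar by rewrite preceq_estar.
have : index f s = index estar s by apply/eqP; rewrite eqn_leq; apply/andP.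
by move/(congr1 (nth set0 s)); rewrite !nth_index // => ->.
Qed.

End CoreOrdering.

Section SmallEdges.
Variables (R : realType) (T : finType).

Definition small_edges (A : {set {set T}}) (b : R) : {set {set T}} :=
  A :&: [set g : {set T} | (#|g|)%:R <= b].

(* The guaranteed number, in units of n, of edges of size at most (1 + hi) k
   in a family of more than (1 - tau) n edges of size at least k whose sizes
   add up to at most (1 + lo) k n plus their number (see small_edges_lb). *)
Definition small_ratio (tau k lo hi : R) : R :=
  ((1 - tau) * (1 + hi) * k - (1 + lo) * k - 1) / (hi * k).

(* Edges larger than (1 + hi) k are costly: a set A of edges of size at least k
   with small total size contains many edges of size at most (1 + hi) k. *)
Lemma small_edges_lb (A : {set {set T}}) (n tau k lo hi : R) :
  (forall g, g \in A -> k <= (#|g|)%:R) -> 1 <= k -> 0 <= tau <= 1 -> 0 < hi -> 0 <= n ->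
  (1 - tau) * n < (#|A|)%:R ->
  \sum_(g in A) (#|g|)%:R <= (1 + lo) * k * n + (#|A|)%:R ->
  n * small_ratio tau k lo hi <= (#|small_edges A ((1 + hi) * k)|)%:R.
Proof.
move=> large k1 /andP [tau0 tau1] hi0 n0 many sum_le.
set S := [set g : {set T} | (#|g|)%:R <= (1 + hi) * k].
pose a : R := (#|A :&: S|)%:R; pose b : R := (#|A :\: S|)%:R.
have split_A : (#|A|)%:R = a + b by rewrite -natrD cardsID.
have sum_ge : k * a + (1 + hi) * k * b <= \sum_(g in A) (#|g|)%:R.
  rewrite (big_setID S) /= /a /b !mulr_natr -[k *+ _]sumr_const -[_ *+ #|A :\: S|]sumr_const.
  apply: lerD; apply: ler_sum => g.
    by rewrite inE => /andP [gA _]; exact: large.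
  by rewrite !inE -ltNge => /andP [/ltW].
have hk0 : 0 < hi * k by rewrite mulr_gt0 //; lra.
rewrite /small_edges -/S -/a /small_ratio mulrA ler_pdivrMr //.
rewrite split_A in many sum_le.
have hi_k : 0 <= (1 + hi) * k - 1 by lra.
have p1 : 0 <= ((1 + hi) * k - 1) * (a + b - (1 - tau) * n) by apply: mulr_ge0; lra.
have p2 : 0 <= tau * n by apply: mulr_ge0.
lra.
Qed.

End SmallEdges.

Section CoreLinkWeight.
Variables (R : realType) (T : finType) (E C : {set {set T}}) (estar : {set T}).
Variable tau : R.
Hypotheses (lin : linear_hg E) (CE : C \subset E) (estar_C : estar \in C).
Hypothesis estar_min : forall w, w \in C -> (#|estar| <= #|w|)%N.
Hypothesis core_deg : forall f, f \in C -> (1 - tau) * (#|T|)%:R < (#|nbhd E f :&: C|)%:R.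
Hypothesis tau01 : 0 <= tau <= 1.

Local Notation k := ((#|estar|)%:R : R).
Local Notation n := ((#|T|)%:R : R).

Lemma core_small_nbrs (f : {set T}) (lo hi : R) : f \in C -> 0 < hi -> (1 <= #|estar|)%N ->
  (#|f|)%:R <= (1 + lo) * k ->
  n * small_ratio tau k lo hi <= (#|small_edges (nbhd E f :&: C) ((1 + hi) * k)|)%:R.
Proof.
move=> fC hi0 k1 f_small; have fE := subsetP CE f fC.
apply: small_edges_lb; rewrite ?ler0n ?(ler_nat R 1) ?core_deg //.
  by move=> g; rewrite inE => /andP [_ gC]; rewrite ler_nat estar_min.
apply: le_trans (_ : (#|f| * #|T| + #|nbhd E f :&: C|)%:R <= _).
  by rewrite -natr_sum ler_nat (sum_sizes_nbhd lin) // subsetIl.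
by rewrite natrD natrM lerD2r ler_wpM2r ?ler0n.
Qed.

(* The main counting step: with M the neighbours of e* in the core of size at
   most (1 + gam) k and W the core edges of size at most (1 + del) k, summing
   link weights of W over the vertices of the edges of M bounds the total
   link weight of W from below. *)
Lemma core_link_weight (gam del : R) : 0 < gam -> 0 < del -> (1 <= #|estar|)%N ->
  0 <= small_ratio tau k 0 gam -> 0 <= small_ratio tau k gam del * (k - 1) - 1 ->
  n ^+ 2 * small_ratio tau k 0 gam * (small_ratio tau k gam del * (k - 1) - 1) <=
  k * (\sum_u link_weight (small_edges C ((1 + del) * k)) u)%:R.
Proof.
move=> gam0 del0 k1 beta0 ak0.
set beta := small_ratio tau k 0 gam; set alpha := small_ratio tau k gam del.
set W := small_edges C ((1 + del) * k).
set M := small_edges (nbhd E estar :&: C) ((1 + gam) * k).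
have estar_E := subsetP CE estar estar_C.
have WE : W \subset E by apply: subset_trans (subsetIl _ _) CE.
have ME : M \subset nbhd E estar by apply: subset_trans (subsetIl _ _) (subsetIl _ _).
have k1R : 1 <= k by rewrite (ler_nat R 1).
have many_M : n * beta <= (#|M|)%:R.
  by apply: core_small_nbrs; rewrite ?addr0 ?mul1r.
have many_W f : f \in M -> n * alpha <= (#|nbhd E f :&: W|)%:R.
  rewrite !inE => /andP [/andP [_ fC] f_small].
  by rewrite /W /small_edges setIA; apply: core_small_nbrs.
have M_link f : f \in M ->
    (#|nbhd E f :&: W|)%:R * (k - 1) <= (\sum_(u in f) link_weight W u)%:R :> R.
  move=> _; rewrite -(natrB _ k1) -natrM ler_nat.
  apply: leq_trans (nbhd_le_link_weight E W f); rewrite -sum_nat_const leq_sum //.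
  by move=> g; rewrite !inE => /andP [_ /andP [gC _]]; rewrite -subn1 leq_sub2r // estar_min.
have := nbhd_sum_link_weight lin WE estar_E ME.
rewrite -(ler_nat R) natr_sum natrD !natrM => upper.
have lower : (#|M|)%:R * (n * alpha * (k - 1)) <=
             \sum_(f in M) (\sum_(u in f) link_weight W u)%:R.
  rewrite mulr_natl -sumr_const; apply: ler_sum => f fM.
  by apply: le_trans (M_link f fM); apply: ler_wpM2r; [rewrite subr_ge0 | exact: many_W].
set S := (\sum_u link_weight W u)%:R in upper *.
set m := (#|M|)%:R in many_M upper lower.
have n0 : 0 <= n by rewrite ler0n.
have p1 : 0 <= (m - n * beta) * (n * (alpha * (k - 1) - 1)).
  by apply: mulr_ge0; [rewrite subr_ge0 | apply: mulr_ge0].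
lra.
Qed.

End CoreLinkWeight.

Section Calibration.
Variable R : realType.

Lemma fourth_root (tau : R) : 0 < tau -> tau < 1 ->
  [/\ 0 < Num.sqrt (Num.sqrt tau), Num.sqrt (Num.sqrt tau) ^+ 4 = tau
    & Num.sqrt (Num.sqrt tau) <= 1].
Proof.
move=> tau0 tau1; have e0 : 0 < Num.sqrt (Num.sqrt tau) by rewrite !sqrtr_gt0.
have e4 : Num.sqrt (Num.sqrt tau) ^+ 4 = tau.
  by rewrite -[4%N]/(2 * 2)%N exprM !sqr_sqrtr ?sqrtr_ge0 // ltW.
by split => //; rewrite -(@expr_le1 _ 4) ?e4 ?sqrtr_ge0 // ltW.
Qed.

(* Choice of gamma = e^3 K: at least (1 - tau - 7e/K) n neighbours of e* in
   the core have size at most (1 + gamma) k. *)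
Lemma ratio_nbrs_lb (e K k : R) : 0 < e -> 1 <= K -> 2 * K <= k * e ^+ 4 ->
  1 - e ^+ 4 - 7 * e / K <= small_ratio (e ^+ 4) k 0 (e ^+ 3 * K).
Proof.
move=> e0 K1 k_large; have K0 : 0 < K by lra.
have k0 : 0 < k.
  have : 0 < k * e ^+ 4 by lra.
  by rewrite pmulr_lgt0 ?exprn_gt0.
rewrite /small_ratio ler_pdivlMr ?mulr_gt0 ?exprn_gt0 // -subr_ge0.
have -> : (1 - e ^+ 4) * (1 + e ^+ 3 * K) * k - (1 + 0) * k - 1 -
          (1 - e ^+ 4 - 7 * e / K) * (e ^+ 3 * K * k) = 6 * (k * e ^+ 4) - 1.
  by field; rewrite gt_eqF.
lra.
Qed.

(* The error terms of the second choice below are all dominated by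
   P = e^2 K^3 k when e <= 1 <= K and k e^4 >= 2K. *)
Lemma dominant_term (e K k : R) : 0 < e -> e <= 1 -> 1 <= K -> 2 * K <= k * e ^+ 4 ->
  [/\ 1 <= e ^+ 2 * K ^+ 3 * k, k * e ^+ 4 <= e ^+ 2 * K ^+ 3 * k,
      e ^+ 3 * K * k <= e ^+ 2 * K ^+ 3 * k &
      2 * (3 * e * K ^+ 4) <= 3 * (e ^+ 2 * K ^+ 3 * k)].
Proof.
move=> e0 e1 K1 k_large; have K0 : 0 < K by lra.
have k0 : 0 <= k.
  have : 0 < k * e ^+ 4 by lra.
  by rewrite pmulr_lgt0 ?exprn_gt0 // => /ltW.
have e2 : e ^+ 2 <= 1 by rewrite expr_le1 // ltW.
have K3 : 1 <= K ^+ 3 by rewrite exprn_ege1.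
have P_e4 : k * e ^+ 4 <= e ^+ 2 * K ^+ 3 * k.
  rewrite mulrC; apply: ler_wpM2r => //.
  rewrite -[4%N]/(2 + 2)%N exprD; apply: ler_wpM2l; first exact: exprn_ge0 (ltW e0).
  exact: le_trans e2 K3.
split => //; first by lra.
  apply: ler_wpM2r => //; have -> : e ^+ 3 * K = e ^+ 2 * (e * K) by ring.
  apply: ler_wpM2l; first exact: exprn_ge0 (ltW e0).
  have K_K3 : K <= K ^+ 3 by rewrite exprS ler_pMr // exprn_ege1.
  by rewrite -[K ^+ 3]mul1r; apply: ler_pM => //; exact: ltW.
have e4e : k * e ^+ 4 <= k * e by apply: ler_wpM2l => //; exact: ler_iXnr (ltW e0) e1.
have -> : 2 * (3 * e * K ^+ 4) = 3 * (e * K ^+ 3) * (2 * K) by ring.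
have -> : 3 * (e ^+ 2 * K ^+ 3 * k) = 3 * (e * K ^+ 3) * (k * e) by ring.
by apply: ler_wpM2l; [rewrite !mulr_ge0 ?exprn_ge0 ?ltW | lra].
Qed.

(* Choice of delta = 3 e K^4: the neighbours of an edge of size at most
   (1 + gamma) k leave enough core edges of size at most (1 + delta) k. *)
Lemma ratio_second_nbrs_lb (e K k : R) : 0 < e -> e <= 1 -> 1 <= K ->
  2 * K <= k * e ^+ 4 ->
  k * (1 - e ^+ 4 - 7 * e / K) <=
  small_ratio (e ^+ 4) k (e ^+ 3 * K) (3 * e * K ^+ 4) * (k - 1) - 1.
Proof.
move=> e0 e1 K1 k_large; have K0 : 0 < K by lra.
have [P1 P_e4 P_e3 P_d] := dominant_term e0 e1 K1 k_large.
set P := e ^+ 2 * K ^+ 3 * k in P1 P_e4 P_e3 P_d.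
have k0 : 0 < k.
  have : 0 < k * e ^+ 4 by lra.
  by rewrite pmulr_lgt0 ?exprn_gt0.
set d := 3 * e * K ^+ 4 in P_d *; set alpha := small_ratio _ _ _ _.
have d0 : 0 < d by rewrite !mulr_gt0 ?exprn_gt0.
have alpha_def : alpha * (d * k) =
    (1 - e ^+ 4) * (1 + d) * k - (1 + e ^+ 3 * K) * k - 1.
  by rewrite /alpha /small_ratio divfK // mulf_neq0 ?gt_eqF.
have alpha1 : alpha <= 1.
  rewrite -(ler_pM2r (_ : 0 < d * k)) ?mulr_gt0 // alpha_def mul1r.
  have : 0 <= e ^+ 4 * (d * k) by rewrite mulr_ge0 ?exprn_ge0 ?mulr_ge0 ?ltW.
  have : 0 <= e ^+ 3 * K * k by rewrite !mulr_ge0 ?exprn_ge0 ?ltW.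
  lra.
set L := 1 - e ^+ 4 - 7 * e / K.
have key : (alpha * (k - 1) - 1 - k * L) * d =
    alpha * (d * k) - (alpha + 1) * d - k * L * d by ring.
have key2 : (1 - e ^+ 4) * (1 + d) * k - (1 + e ^+ 3 * K) * k - 1 - k * L * d =
    21 * P - k * e ^+ 4 - e ^+ 3 * K * k - 1.
  by rewrite /L /P /d; field; rewrite gt_eqF.
rewrite alpha_def in key.
have alpha_d : (alpha + 1) * d <= 2 * d by rewrite ler_pM2r //; lra.
have : 0 <= (alpha * (k - 1) - 1 - k * L) * d by lra.
by rewrite pmulr_lge0 // subr_ge0.
Qed.

(* Normalised volume from link weights: vol W >= x as soon as the link
   weights of W add up to at least n^2 x, because 2 C(n, 2) <= n^2. *)
Lemma vol_ge_link_weight (T : finType) (W : {set {set T}}) (x : R) :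
  (1 < #|T|)%N -> 0 <= x -> (#|T|)%:R ^+ 2 * x <= (\sum_u link_weight W u)%:R ->
  x <= vol R W.
Proof.
move=> n2 x0; rewrite sum_link_weight natr_sum /vol.
under eq_bigr do rewrite natrM.
rewrite -big_distrl /= => lw.
have Cn0 : 0 < ('C(#|T|, 2))%:R :> R by rewrite ltr0n bin_gt0.
have Cn_n : ('C(#|T|, 2))%:R * 2 <= (#|T|)%:R ^+ 2 :> R.
  by rewrite -natrM bin2_double -natrX ler_nat expnS expn1 leq_mul2l leq_pred orbT.
have : x * (('C(#|T|, 2))%:R * 2) <= x * (#|T|)%:R ^+ 2 by apply: ler_wpM2l.
rewrite ler_pdivlMr //; lra.
Qed.

Lemma core_volume (T : finType) (E C : {set {set T}}) (estar : {set T}) (tau K : R) :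
  linear_hg E -> C \subset E -> estar \in C ->
  (forall w, w \in C -> (#|estar| <= #|w|)%N) ->
  (forall f, f \in C -> (1 - tau) * (#|T|)%:R < (#|nbhd E f :&: C|)%:R) ->
  0 < tau -> tau < 1 -> 1 <= K -> 2 * K < (#|estar|)%:R * tau ->
  0 < 1 - tau - 7 * Num.sqrt (Num.sqrt tau) / K ->
  (1 - tau - 7 * Num.sqrt (Num.sqrt tau) / K) ^+ 2 <=
  vol R (small_edges C ((1 + 3 * Num.sqrt (Num.sqrt tau) * K ^+ 4) * (#|estar|)%:R)).
Proof.
move=> lin CE estar_C estar_min core_deg tau0 tau1 K1 k_large L0.
have [e0 e4 e1] := fourth_root tau0 tau1.
set e := Num.sqrt (Num.sqrt tau) in e0 e4 e1 L0 *.
set k := (#|estar|)%:R in k_large *.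
set L := 1 - tau - 7 * e / K in L0 *.
have k_large4 : 2 * K <= k * e ^+ 4 by rewrite e4 ltW.
have k_gt2 : (2 < #|estar|)%N.
  have tk : k * tau <= k by rewrite ler_piMr ?ler0n ?ltW.
  by rewrite -(ltr_nat R); lra.
have k0 : 0 < k by rewrite ltr0n (ltn_trans _ k_gt2).
have beta_L := ratio_nbrs_lb e0 K1 k_large4; rewrite e4 -/L in beta_L.
have alpha_L := ratio_second_nbrs_lb e0 e1 K1 k_large4; rewrite e4 -/L in alpha_L.
have tau01 : 0 <= tau <= 1 by rewrite !ltW.
have K0 : 0 < K by apply: lt_le_trans K1.
have gam0 : 0 < e ^+ 3 * K by rewrite mulr_gt0 ?exprn_gt0.
have del0 : 0 < 3 * e * K ^+ 4 by rewrite !mulr_gt0 ?exprn_gt0.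
have n_k : (#|estar| <= #|T|)%N by apply: max_card.
apply: vol_ge_link_weight; first exact: leq_trans (ltnW k_gt2) n_k.
  by rewrite exprn_ge0 ?ltW.
rewrite -(ler_pM2l k0); apply: le_trans (core_link_weight lin CE estar_C estar_min
  core_deg tau01 gam0 del0 (ltnW (ltnW k_gt2)) (le_trans (ltW L0) beta_L)
  (le_trans (mulr_ge0 (ltW k0) (ltW L0)) alpha_L)).
rewrite -/k (_ : k * _ = (#|T|)%:R ^+ 2 * L * (k * L)); last by ring.
have n0 : 0 <= (#|T|)%:R ^+ 2 :> R by rewrite exprn_ge0 ?ler0n.
apply: ler_pM; [exact: mulr_ge0 n0 (ltW L0) | exact: mulr_ge0 (ltW k0) (ltW L0) | | exact: alpha_L].
exact: ler_wpM2l.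
Qed.

End Calibration.

Lemma size_threshold (R : realType) (tau K : R) : 0 < tau -> 1 <= K ->
  exists r0 : nat, forall r1 : nat, (r0 <= r1)%N -> 2 * K < r1%:R * tau.
Proof.
move=> tau0 K1; exists (Num.bound (2 * K / tau)) => r1 r0_r1.
rewrite -ltr_pdivrMr //; apply: lt_le_trans (archi_boundP _) _.
  by rewrite divr_ge0 ?ltW //; lra.
by rewrite ler_nat.
Qed.

Theorem lemma6p2 (R : realType) (tau K : R) :
  0 < tau -> tau < 1 -> 1 <= K ->
  0 < 1 - tau - 7 * Num.sqrt (Num.sqrt tau) / K ->
  exists r0 : nat, forall r1 : nat, (r0 <= r1)%N ->
  forall (T : finType) (E : {set {set T}}),
    hypergraph E -> linear_hg E ->
    (forall e, e \in E -> (r1 <= #|e|)%N) ->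
    let n := #|T| in
    exists s : seq {set T}, edge_ordering E s /\
      ((forall e, e \in E -> (dprec E s e)%:R <= (1 - tau) * n%:R :> R)
       \/
       exists (W : {set {set T}}) (estar : {set T}),
         [/\ W \subset E, estar \in W,
             (forall w, w \in W -> preceq s w estar) &
           [/\
             (* (W1): max_{e in W} |e| <= (1 + 3 tau^{1/4} K^4) min_{e in W} |e| *)
             (forall e f, e \in W -> f \in W ->
                #|e|%:R <= (1 + 3 * Num.sqrt (Num.sqrt tau) * K ^+ 4) * #|f|%:R :> R),
             (* (W2) *)
             vol R W >= (1 - tau - 7 * Num.sqrt (Num.sqrt tau) / K) ^+ 2
                        / (1 + 3 * Num.sqrt (Num.sqrt tau) * K ^+ 4),
             (* (O1) *)
             (forall f, f \in E -> preceq s estar f -> f != estar ->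
                (dprec E s f)%:R <= (1 - tau) * n%:R :> R) &
             (* (O2) *)
             (forall e f, e \in E -> f \in E -> preceq s f e -> preceq s e estar ->
                (#|e| <= #|f|)%N)]]).
Proof.
move=> tau0 tau1 K1 L0; have [r0 large] := size_threshold tau0 K1.
exists r0 => r1 r0_r1 T E _ lin size_ge n.
have [C [t [CE u_t t_def low_t high_C]]] := peel E ((1 - tau) * n%:R) E.
exists (size_sorted C ++ t); split; first exact: core_edge_ordering.
have [C0 | C_neq0] := eqVneq C set0.
  by left => e eE; apply: (core_tail_dprec t_def low_t); rewrite t_def C0 setD0.
right; set estar := last set0 (size_sorted C).
have estar_C : estar \in C := estar_in_core C_neq0.
have estar_min := estar_min CE u_t t_def C_neq0.
set d := 3 * Num.sqrt (Num.sqrt tau) * K ^+ 4.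
have d0 : 0 <= d by rewrite !mulr_ge0 ?sqrtr_ge0 ?exprn_ge0 //; lra.
exists (small_edges C ((1 + d) * (#|estar|)%:R)), estar; split.
- exact: subset_trans (subsetIl _ _) CE.
- by rewrite !inE estar_C /= ler_peMl ?ler0n //; lra.
- move=> w; rewrite inE => /andP [wC _].
  by rewrite (preceq_estar u_t t_def C_neq0) // (core_edge_ordering CE u_t t_def).2 (subsetP CE).
split.
- move=> e f; rewrite !inE => /andP [_ e_small] /andP [fC _].
  by apply: le_trans e_small _; rewrite ler_wpM2l ?ler_nat ?estar_min //; lra.
- apply: le_trans (core_volume lin CE estar_C estar_min high_C tau0 tau1 K1 _ L0).
    by rewrite ler_pdivrMr ?ler_peMr ?sqr_ge0 //; lra.
  apply: lt_le_trans (large _ r0_r1) _; apply: ler_wpM2r; first exact: ltW.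
  by rewrite ler_nat size_ge // (subsetP CE).
- exact: (after_estar_dprec CE u_t t_def low_t C_neq0).
- exact: (core_prefix_sorted CE u_t t_def C_neq0).
Qed.
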